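(* Let $X$ be the set of the six transpositions of $\mathrm{Sym}(4)$, with distinguished letter $(1\,2)$, and let $A=\mathrm{Alt}(4)$ act faithfully and transitively on $X$ by conjugation, $x.a=a^{-1}xa$. Let $b\in\mathrm{St}(1)\le\mathrm{Aut}(X^* )$ be defined by $b|_{(1\,2)}=b$, $b|_{(3\,4)}=(1\,2\,3)$, and $b|_x=(1\,2)(3\,4)$ for all $x\in X\setminus\{(1\,2),(3\,4)\}$ (elements of $A$ acting as rooted automorphisms), let $B=\langle b\rangle$ and $G=\langle A\cup B\rangle$. Then $G$ is a CS group which is stable and strongly orbitwise-abelian, the dynamical system $\Lambda_{b'}$ is eventually trivial for every $b'\in B$, and $G$ is periodic.
   Context: For an alphabet $X$ with distinguished letter $0$ (here $0=(1\,2)$), $\dot X=X\setminus\{0\}$; $X^*$ is the free monoid on $X$ viewed as a rooted tree; $\mathrm{Aut}(X^* )$ acts on the right; sections are defined by $(u\star v).g=u.g\star v.(g|_u)$; elements of $\mathrm{Sym}(X)$ are rooted automorphisms; $\mathrm{St}(1)$ is the first layer stabiliser. A CS group is $\langle A\cup B\rangle$ with $A\le\mathrm{Sym}(X)$ transitive and $B\le\mathrm{St}(1)$ such that $b|_0=b$ for $b\in B$ and the $b|_x$ ($b\in B$, $x\in\dot X$) lie in $A$ and generate $A$. $\mathrm{orb}_c(0)$ is the $\langle c\rangle$-orbit of $0$, $\ell_c(0)$ its length. $\mathrm{mp}_A(0,x)=\{c\in A:0.c=x\}$; fix $e_{0\mapsto x}\in\mathrm{mp}_A(0,x)$ with $e_{0\mapsto0}=1_A$.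 $\mathfrak C(a,x)=\{cac^{-1}:c\in\mathrm{mp}_A(0,x)\}$; $\mathfrak X(a,x)=\bigcup_{c\in\mathfrak C(a,x)}\mathrm{orb}_c(0)\setminus\{0\}$. $\lambda_{b'}(a)=b'|_{0.a}\cdots b'|_{0.a^{\ell_a(0)-1}}$, $\lambda_{b'}(a,x)=\lambda_{b'}(e_{0\mapsto x}ae_{0\mapsto x}^{-1})$, $\Lambda_{b'}(P)=\bigcup_{a\in P}\{\lambda_{b'}(a,x):x\in X\}$ for $P\subseteq A$; eventually trivial means: for every $a$ there is $n$ with $\Lambda_{b'}^m(\{a\})\subseteq\{1_A\}$ for all $m>n$. $G$ is stable if $\lambda_{b'}(c')=\lambda_{b'}(c'')$ for all $b'\in B$, $a\in A$, $x\in X$, $c',c''\in\mathfrak C(a,x)$; strongly orbitwise-abelian if $\langle b'|_y:y\in\mathfrak X(a,x),b'\in B\rangle$ is abelian for all $a,x$. Periodic: every element has finite order. *)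

From mathcomp Require Import all_boot all_fingroup all_solvable.
Set Implicit Arguments. Unset Strict Implicit. Unset Printing Implicit Defensive.

(* An automorphism g is represented by the map u |-> u.g on words       *)
(* (right action); the product g h acts as u.(gh) = (u.g).h.           *)
(* Equality of automorphisms is extensional equality (=1).             *)
Section Tree.
Variable X : finType.

Definition taut := seq X -> seq X.

Definition tmul (g h : taut) : taut := fun u => h (g u).
Definition tid : taut := fun u => u.

Definition is_taut (g : taut) : Prop :=
  [/\ (forall u, size (g u) = size u),
      (forall u v, take (size u) (g (u ++ v)) = g u) & bijective g].

Definition in_St1 (g : taut) : Prop := forall x : X, g [:: x] = [:: x].

Definition sect (g : taut) (u : seq X) : taut :=
  fun v => drop (size u) (g (u ++ v)).

Definition rooted (a : {perm X}) : taut :=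
  fun u => if u is y :: w then a y :: w else [::].

Inductive gen (S : taut -> Prop) : taut -> Prop :=
| gen_id : gen S tid
| gen_S g : S g -> gen S g
| gen_mul g h : gen S g -> gen S h -> gen S (tmul g h)
| gen_inv g h : gen S g -> cancel g h -> cancel h g -> gen S h
| gen_ext g h : gen S g -> g =1 h -> gen S h.

Variable o : X.
Implicit Types (A : {set {perm X}}) (B : taut -> Prop).
Local Open Scope group_scope.

Definition ell (c : {perm X}) : nat := #|orbit 'P <[c]> o|.

Definition Cset A (a : {perm X}) (x : X) : {set {perm X}} :=
  [set c * a * c^-1 | c in A & c o == x].

Definition Xset A (a : {perm X}) (x : X) (y : X) : Prop :=
  exists2 c, c \in Cset A a x & (y \in orbit 'P <[c]> o) && (y != o).

Definition lam (b' : taut) (a : {perm X}) : taut :=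
  foldl (fun f i => tmul f (sect b' [:: (a ^+ i) o])) tid (iota 1 (ell a).-1).

(* Lambda_{b'}(P) = { lambda_{b'}(e_x a e_x^-1) : a in P, x in X },
   elements of A being identified with rooted automorphisms. *)
Definition Lam (e : X -> {perm X}) (b' : taut) (P : {perm X} -> Prop)
  : {perm X} -> Prop :=
  fun p => exists a x, P a /\ (rooted p =1 lam b' (e x * a * (e x)^-1)).

Definition eventually_trivial (A : {set {perm X}}) (e : X -> {perm X})
    (b' : taut) : Prop :=
  forall a, a \in A -> exists n, forall m, n < m ->
    forall p, iter m (Lam e b') (eq a) p -> p = 1.

Definition CS_group A B : Prop :=
  [/\ group_set A,
      (forall x, exists2 a, a \in A & a o = x),
      (forall b', B b' -> [/\ is_taut b', in_St1 b' & (sect b' [:: o] =1 b')]),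
      (forall b' x, B b' -> x != o -> exists2 a, a \in A & (sect b' [:: x] =1 rooted a))
    & exists S : {set {perm X}},
        (forall a, a \in S <-> exists b' x, [/\ B b', x != o & (sect b' [:: x] =1 rooted a)])
        /\ <<S>> = A].

Definition is_stable A B : Prop :=
  forall b' a x c1 c2, B b' -> a \in A -> c1 \in Cset A a x -> c2 \in Cset A a x ->
    lam b' c1 =1 lam b' c2.

Definition strongly_orbitwise_abelian A B : Prop :=
  forall a x, a \in A ->
    let S := fun g => exists b' y, [/\ B b', Xset A a x y & (g =1 sect b' [:: y])] in
    forall g h, gen S g -> gen S h -> tmul g h =1 tmul h g.

Definition is_periodic (G : taut -> Prop) : Prop :=
  forall g, G g -> exists2 n, 0 < n & forall u, iter n g u = u.

(* self-similar element of St(1): s x = None means section at x is the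
   element itself, s x = Some p means section at x is rooted p *)
Fixpoint ssact (s : X -> option {perm X}) (u : seq X) : seq X :=
  match u with
  | [::] => [::]
  | x :: w => x :: match s x with None => ssact s w | Some p => rooted p w end
  end.

End Tree.

Local Open Scope group_scope.

Definition is_transp (s : 'S_4) : bool :=
  [exists i, exists j, (i != j) && (s == tperm i j)].

(* X = the six transpositions of Sym(4) (points 1..4 are 'I_4 = 0..3) *)
Definition X4 := {s : 'S_4 | is_transp s}.

Lemma is_transpJ (s a : 'S_4) : is_transp s -> is_transp (s ^ a).
Proof.
move/existsP=> [i /existsP [j /andP [ij /eqP ->]]].
apply/existsP; exists (a i); apply/existsP; exists (a j).
by rewrite tpermJ (inj_eq perm_inj) ij eqxx.
Qed.

Lemma is_transp_t (i j : 'I_4) : i != j -> is_transp (tperm i j).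
Proof. by move=> ij; apply/existsP; exists i; apply/existsP; exists j; rewrite ij eqxx. Qed.

Definition tr12 : X4 := Sub (tperm (@Ordinal 4 0 isT) (@Ordinal 4 1 isT)) (is_transp_t (isT : (@Ordinal 4 0 isT) != (@Ordinal 4 1 isT))).
Definition tr34 : X4 := Sub (tperm (@Ordinal 4 2 isT) (@Ordinal 4 3 isT)) (is_transp_t (isT : (@Ordinal 4 2 isT) != (@Ordinal 4 3 isT))).

Definition conjT (a : 'S_4) (x : X4) : X4 := Sub (val x ^ a) (is_transpJ a (valP x)).

Lemma conjT_inj a : injective (conjT a).
Proof. by move=> x y /(congr1 val) /= /conjg_inj /val_inj. Qed.

Definition conjX (a : 'S_4) : {perm X4} := perm (@conjT_inj a).

Definition A4 : {set {perm X4}} := conjX @: Alt 'I_4.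

(* (1 2 3) : 1->2->3->1 and (1 2)(3 4) in Sym(4) *)
Definition c123 : 'S_4 := tperm (@Ordinal 4 0 isT) (@Ordinal 4 1 isT) * tperm (@Ordinal 4 0 isT) (@Ordinal 4 2 isT).
Definition d1234 : 'S_4 := tperm (@Ordinal 4 0 isT) (@Ordinal 4 1 isT) * tperm (@Ordinal 4 2 isT) (@Ordinal 4 3 isT).

Definition bsec (x : X4) : option {perm X4} :=
  if x == tr12 then None
  else if x == tr34 then Some (conjX c123) else Some (conjX d1234).

Definition b4 : taut X4 := ssact bsec.
Definition b4inv : taut X4 := ssact (fun x => omap (fun p => p^-1) (bsec x)).

Definition B4 (f : taut X4) : Prop :=
  exists n, f =1 iter n b4 \/ f =1 iter n b4inv.

Definition G4 : taut X4 -> Prop :=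
  gen (fun f => (exists2 a, a \in A4 & f =1 rooted a) \/ B4 f).

(* The section of b at (3 4) is C = (1 2 3); at every other x <> (1 2) it is
   D = (1 2)(3 4), which fixes (1 2).  Hence b^6 = 1 and every element of B is
   some b^m.  A finite check on Alt(4) shows that an element c of A moving
   (1 2) is either an involution swapping (1 2) and (3 4), and then
   lambda_{b^m}(c) = C^m, or of order 3 with an orbit avoiding (3 4), and then
   lambda_{b^m}(c) = D^m D^m = 1.  This dichotomy is invariant under
   conjugation, which gives stability; along one orbit all sections of b lie in
   <C> or all in <D>, which gives strong orbitwise-abelianness; and Lambda maps
   A into <C>, whose elements have order dividing 3 and are then sent to 1.

   For periodicity write g in G as a word in rooted letters and powers of b.
   If k is the length of the orbit of x under the root of g, then g^k fixes x
   and its section at x is again such a word, with at most as many powers of b.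
   With equally many, either it consists of powers of b only (and has period
   6), or its rooted letters pass from outside <C> and <D> into <C> (orbit of
   length 2), or from outside <D> into <D> (orbit of length 3).  So
   3 * (number of powers of b) + (class of the rooted letters) decreases, and
   periodicity follows by induction on it. *)

From mathcomp Require Import all_boot all_fingroup all_solvable.
From mathcomp Require Import zify.
Set Implicit Arguments. Unset Strict Implicit. Unset Printing Implicit Defensive.
Local Open Scope group_scope.

Lemma iter_mod_fixpoint (T : Type) (f : T -> T) k i y :
  iter k f y = y -> iter i f y = iter (i %% k) f y.
Proof.
move=> fix_y; rewrite {1}(divn_eq i k) addnC iterD; congr iter.
by elim: (i %/ k) => // q IH; rewrite mulSn iterD IH fix_y.
Qed.

Lemma expg23_eq1 (gT : finGroupType) (x : gT) : x ^+ 2 = 1 -> x ^+ 3 = 1 -> x = 1.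
Proof. by move=> x2; rewrite expgSr x2 mul1g. Qed.

Lemma conjg_expg_eq1 (gT : finGroupType) (k a : gT) n :
  ((k * a * k^-1) ^+ n == 1) = (a ^+ n == 1).
Proof.
have -> : k * a * k^-1 = a ^ k^-1 by rewrite conjgE invgK mulgA.
by rewrite -conjXg conjg_eq1.
Qed.

Section RootedAutomorphisms.
Variable X : finType.
Implicit Types (p q : {perm X}) (u : seq X).

Lemma permV_eq p y z : (p^-1 y == z) = (y == p z).
Proof. by apply/eqP/eqP => [<-|->]; rewrite ?permKV ?permK. Qed.

Lemma permJV p q y : (p * q * p^-1) y = p^-1 (q (p y)).
Proof. by rewrite !permM. Qed.

Lemma rootedM p q u : rooted q (rooted p u) = rooted (p * q) u.
Proof. by case: u => //= y w; rewrite permM. Qed.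

Lemma rooted1 u : rooted 1 u = u.
Proof. by case: u => //= y w; rewrite perm1. Qed.

Lemma rooted_inj p q : rooted p =1 rooted q -> p = q.
Proof. by move=> pq; apply/permP => y; have [] := pq [:: y]. Qed.

Lemma size_rooted p u : size (rooted p u) = size u.
Proof. by case: u. Qed.

Lemma eq_sect (f g : taut X) u : f =1 g -> sect f u =1 sect g u.
Proof. by move=> fg v; rewrite /sect fg. Qed.

Lemma ell_traject (o : X) (c : {perm X}) k :
  0 < k -> iter k c o = o -> uniq (traject c o k) -> ell o c = k.
Proof.
move=> k_gt0 ck_o uniq_o; rewrite /ell -porbitE.
rewrite -(size_traject c o k) -(card_uniqP uniq_o); apply: eq_card => y.
apply/porbitP/trajectP => [[i ->]|[i _ ->]]; last by exists i; rewrite permX.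
by exists (i %% k); rewrite ?ltn_mod // permX (iter_mod_fixpoint _ ck_o).
Qed.

Lemma gen_rooted_group (S : taut X -> Prop) (H : {group {perm X}}) g :
  (forall f, S f -> exists2 r, r \in H & f =1 rooted r) ->
  gen S g -> exists2 r, r \in H & g =1 rooted r.
Proof.
move=> SH; elim => {g} [||g h _ [r1 r1H g_r1] _ [r2 r2H h_r2]
                       |g h _ [r rH g_r] gh _|g h _ [r rH g_r] gh].
- by exists 1; rewrite ?group1 // => u; rewrite rooted1.
- exact: SH.
- by exists (r1 * r2); rewrite ?groupM // => u; rewrite /tmul g_r1 h_r2 rootedM.
- exists r^-1; rewrite ?groupV // => u.
  by rewrite -[RHS]gh g_r rootedM mulVg rooted1.
- by exists r => // u; rewrite -gh.
Qed.

End RootedAutomorphisms.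

(** * Alt(4) acting on the transpositions of Sym(4) *)

Notation i0 := (@Ordinal 4 0 isT).
Notation i1 := (@Ordinal 4 1 isT).
Notation i2 := (@Ordinal 4 2 isT).
Notation i3 := (@Ordinal 4 3 isT).

Definition points4 : seq 'I_4 := [:: i0; i1; i2; i3].

Lemma mem_points4 k : k \in points4.
Proof. by case: k => [[|[|[|[|m]]]] lt_m4]. Qed.

(* A transparent copy of [tperm] on ['I_4], so that the finite checks below
   can be run by [vm_compute]. *)
Definition tperm_fun (i j k : 'I_4) := if k == i then j else if k == j then i else k.

Lemma tpermEfun i j k : tperm i j k = tperm_fun i j k.
Proof.
rewrite /tperm_fun; case: tpermP => [->|->|/eqP/negbTE-> /eqP/negbTE->//].
- by rewrite eqxx.
- by case: eqP => [->|]; rewrite ?eqxx.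
Qed.

Definition alt4_word (ws : seq bool) : 'S_4 :=
  foldr (fun b s => (if b then c123 else d1234) * s) 1 ws.

Definition alt4_word_fun (ws : seq bool) (k : 'I_4) : 'I_4 :=
  foldl (fun k b => if b then tperm_fun i0 i2 (tperm_fun i0 i1 k)
                    else tperm_fun i2 i3 (tperm_fun i0 i1 k)) k ws.

Lemma alt4_wordE ws k : alt4_word ws k = alt4_word_fun ws k.
Proof.
elim: ws k => [|b ws IH] k /=; first by rewrite perm1.
by rewrite permM IH; case: b; rewrite /c123 /d1234 permM !tpermEfun.
Qed.

Lemma alt4_word_even ws : alt4_word ws \in Alt 'I_4.
Proof.
rewrite Alt_even; elim: ws => [|b ws IH] /=; first by rewrite odd_perm1.
rewrite odd_permM (negbTE IH) addbF.
by case: b; rewrite /c123 /d1234 odd_permM !odd_tperm.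
Qed.

Definition alt4_words : seq (seq bool) :=
  [:: [::]; [:: true]; [:: false]; [:: true; true]; [:: true; false];
      [:: false; true]; [:: true; true; false]; [:: true; false; true];
      [:: false; true; true]; [:: false; true; false];
      [:: true; true; false; true]; [:: true; false; true; true]].

Lemma card_Alt4 : #|Alt 'I_4| = 12.
Proof.
have := @card_Alt 'I_4; rewrite card_ord => /(_ isT) card2.
by apply/eqP; rewrite -(eqn_pmul2l (isT : 0 < 2)) card2.
Qed.

Lemma Alt4_wordP s : s \in Alt 'I_4 -> exists2 ws, ws \in alt4_words & s = alt4_word ws.
Proof.
have uniq_words : uniq (map alt4_word alt4_words).
  apply: (@map_uniq _ _ (fun s : 'S_4 => [seq s k | k <- points4])).
  rewrite -map_comp (eq_map (g := fun ws => [seq alt4_word_fun ws k | k <- points4])).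
    by vm_compute.
  by move=> ws; rewrite /comp; apply: eq_map => k; rewrite alt4_wordE.
have words_Alt : [set s in map alt4_word alt4_words] = Alt 'I_4.
  have card_words : #|[set s in map alt4_word alt4_words]| = 12.
    by rewrite cardsE (card_uniqP uniq_words) size_map.
  apply/eqP; rewrite eqEcard card_words card_Alt4 andbT.
  by apply/subsetP => t; rewrite inE => /mapP [ws _ ->]; apply: alt4_word_even.
by rewrite -words_Alt inE => /mapP.
Qed.

Lemma X4_tperm (x : X4) : exists i j, i != j /\ val x = tperm i j.
Proof. by case: x => s /= /existsP [i /existsP [j /andP [ij /eqP ->]]]; exists i, j. Qed.

Definition same_pair (p q : 'I_4 * 'I_4) :=
  ((p.1 == q.1) && (p.2 == q.2)) || ((p.1 == q.2) && (p.2 == q.1)).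

Lemma eq_X4_tperm (x y : X4) i j k l : i != j ->
  val x = tperm i j -> val y = tperm k l -> (x == y) = same_pair (i, j) (k, l).
Proof.
move=> ij x_ij y_kl; apply/eqP/idP => [xy|].
  have : tperm k l i = j by rewrite -y_kl -xy x_ij tpermL.
  rewrite /same_pair /=; case: tpermP => [-> <-|-> <-|_ _ ij']; rewrite ?eqxx ?orbT //.
  by rewrite ij' eqxx in ij.
rewrite /same_pair /= => /orP [] /andP [/eqP ik /eqP jl]; apply: val_inj.
  by rewrite x_ij y_kl ik jl.
by rewrite x_ij y_kl ik jl tpermC.
Qed.

Lemma val_tr12 : val tr12 = tperm i0 i1. Proof. by []. Qed.
Lemma val_tr34 : val tr34 = tperm i2 i3. Proof. by []. Qed.

Lemma conjX_tperm s x i j : val x = tperm i j -> val (conjX s x) = tperm (s i) (s j).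
Proof. by move=> x_ij; rewrite /conjX permE /= x_ij tpermJ. Qed.

Lemma conjXM s t : conjX (s * t) = conjX s * conjX t.
Proof. by apply/permP => x; apply: val_inj; rewrite permM !permE /= conjgM. Qed.

Lemma conjX1 : conjX 1 = 1.
Proof. by apply/permP => x; apply: val_inj; rewrite permE perm1 /= conjg1. Qed.

Lemma conjX_expg_eq1 (s : 'S_4) n : (forall k, iter n s k = k) -> conjX s ^+ n = 1.
Proof.
move=> sn; apply/permP => x; rewrite permX perm1; apply: val_inj.
have [i [j [_ x_ij]]] := X4_tperm x.
have iter_x m : val (iter m (conjX s) x) = tperm (iter m s i) (iter m s j).
  by elim: m => //= m IH; rewrite (conjX_tperm _ IH).
by rewrite iter_x !sn.
Qed.

Lemma group_set_A4 : group_set A4.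
Proof.
apply/group_setP; split; first by rewrite -conjX1 imset_f.
by move=> _ _ /imsetP [s sA ->] /imsetP [t tA ->]; rewrite -conjXM imset_f ?groupM.
Qed.
Canonical A4_group := Group group_set_A4.

Lemma alt4_word_A4 ws : conjX (alt4_word ws) \in A4.
Proof. exact/imset_f/alt4_word_even. Qed.

(* The two alternatives of [A4_cases] for [conjX f], read off the points
   through (i j) ^ f = (f i  f j). *)
Definition A4_case_fun (f : 'I_4 -> 'I_4) :=
  let p1 := (f i0, f i1) in let p2 := (f (f i0), f (f i1)) in
  (all (fun k => iter 2 f k == k) points4 && (same_pair p1 (i0, i1) || same_pair p1 (i2, i3)))
  || [&& all (fun k => iter 3 f k == k) points4, ~~ same_pair p1 (i0, i1),
         ~~ same_pair p1 (i2, i3), ~~ same_pair p2 (i0, i1) & ~~ same_pair p2 (i2, i3)].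

Lemma alt4_words_cases : all (fun ws => A4_case_fun (alt4_word_fun ws)) alt4_words.
Proof. by vm_compute. Qed.

Lemma A4_cases c : c \in A4 ->
  (c ^+ 2 = 1 /\ (c tr12 = tr12 \/ c tr12 = tr34)) \/
  (c ^+ 3 = 1 /\ [/\ c tr12 != tr12, c tr12 != tr34, c (c tr12) != tr12
                   & c (c tr12) != tr34]).
Proof.
case/imsetP => _ /Alt4_wordP [ws ws_in ->] ->.
have := allP alt4_words_cases ws ws_in; rewrite /A4_case_fun.
set s := alt4_word ws; set f := alt4_word_fun ws.
have sf k : s k = f k by rewrite alt4_wordE.
have val1 : val (conjX s tr12) = tperm (f i0) (f i1).
  by rewrite (conjX_tperm _ val_tr12) !sf.
have val2 : val (conjX s (conjX s tr12)) = tperm (f (f i0)) (f (f i1)).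
  by rewrite (conjX_tperm _ val1) !sf.
have f1 : f i0 != f i1 by rewrite -!sf (inj_eq perm_inj).
have f2 : f (f i0) != f (f i1) by rewrite -!sf !(inj_eq perm_inj).
have expX n : (forall k, k \in points4 -> iter n f k == k) -> conjX s ^+ n = 1.
  move=> fn; apply: conjX_expg_eq1 => k; rewrite (eq_iter sf); exact/eqP/fn/mem_points4.
case/orP => [/andP [/allP f_2 /orP pair1] | /and5P [/allP f_3 n1 n2 n3 n4]].
- left; split; first exact: expX.
  by case: pair1 => pair1; [left|right]; apply/eqP;
    rewrite ?(eq_X4_tperm f1 val1 val_tr12) ?(eq_X4_tperm f1 val1 val_tr34).
- right; split; first exact: expX.
  by rewrite (eq_X4_tperm f1 val1 val_tr12) (eq_X4_tperm f1 val1 val_tr34)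
     (eq_X4_tperm f2 val2 val_tr12) (eq_X4_tperm f2 val2 val_tr34).
Qed.

Lemma alt4_words_transitive :
  all (fun i => all (fun j => (i == j) ||
    has (fun ws => same_pair (alt4_word_fun ws i0, alt4_word_fun ws i1) (i, j))
        alt4_words) points4) points4.
Proof. by vm_compute. Qed.

Lemma A4_transitive x : exists2 k, k \in A4 & k tr12 = x.
Proof.
have [i [j [ij x_ij]]] := X4_tperm x.
have := allP (allP alt4_words_transitive i (mem_points4 i)) j (mem_points4 j).
rewrite (negbTE ij) => /hasP [ws _ pair_ij].
exists (conjX (alt4_word ws)); first exact: alt4_word_A4.
apply/eqP; rewrite (eq_X4_tperm _ (conjX_tperm _ val_tr12) x_ij) ?(inj_eq perm_inj) //.
by rewrite !alt4_wordE.
Qed.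

Definition C := conjX c123.
Definition D := conjX d1234.

Lemma c123_word : c123 = alt4_word [:: true]. Proof. by rewrite /= mulg1. Qed.
Lemma d1234_word : d1234 = alt4_word [:: false]. Proof. by rewrite /= mulg1. Qed.

Lemma C_A4 : C \in A4. Proof. by rewrite /C c123_word alt4_word_A4. Qed.
Lemma D_A4 : D \in A4. Proof. by rewrite /D d1234_word alt4_word_A4. Qed.

Lemma expgC3 : C ^+ 3 = 1.
Proof.
apply: conjX_expg_eq1 => k; rewrite c123_word (eq_iter (alt4_wordE _)).
by have := mem_points4 k; rewrite !inE => /or4P [] /eqP ->.
Qed.

Lemma expgD2 : D ^+ 2 = 1.
Proof.
apply: conjX_expg_eq1 => k; rewrite d1234_word (eq_iter (alt4_wordE _)).
by have := mem_points4 k; rewrite !inE => /or4P [] /eqP ->.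
Qed.

Lemma D_tr12 : D tr12 = tr12.
Proof.
by apply/eqP; rewrite (eq_X4_tperm _ (conjX_tperm _ val_tr12) val_tr12)
   ?(inj_eq perm_inj) // d1234_word !alt4_wordE.
Qed.

Lemma tr34_tr12 : tr34 != tr12.
Proof. by rewrite (eq_X4_tperm _ val_tr34 val_tr12). Qed.

Definition tr13 : X4 := Sub (tperm i0 i2) (is_transp_t (isT : i0 != i2)).

Lemma tr13_tr12 : tr13 != tr12. Proof. by rewrite (eq_X4_tperm (_ : i0 != i2) _ val_tr12). Qed.
Lemma tr13_tr34 : tr13 != tr34. Proof. by rewrite (eq_X4_tperm (_ : i0 != i2) _ val_tr34). Qed.

Lemma A4_expg_eq1 a : a \in A4 -> a ^+ 2 = 1 \/ a ^+ 3 = 1.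
Proof. by case/A4_cases => [[]|[]]; auto. Qed.

Lemma A4_expg6 a : a \in A4 -> a ^+ 6 = 1.
Proof.
case/A4_expg_eq1 => an.
- by rewrite (_ : 6 = 2 * 3)%N // expgM an expg1n.
- by rewrite (_ : 6 = 3 * 2)%N // expgM an expg1n.
Qed.

Lemma A4_order3 a : a \in A4 -> a ^+ 2 != 1 -> a ^+ 3 = 1.
Proof. by move=> aA /negbTE a2; case: (A4_expg_eq1 aA) => // /eqP; rewrite a2. Qed.

Lemma conjA4 k a : k \in A4 -> a \in A4 -> k * a * k^-1 \in A4.
Proof. by move=> kA aA; rewrite !groupM ?groupV. Qed.

Lemma A4_order3_nofix a x : a \in A4 -> a ^+ 2 != 1 -> a x != x /\ a (a x) != x.
Proof.
move=> aA a2; have [k kA kx] := A4_transitive x.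
have a2' : (k * a * k^-1) ^+ 2 != 1 by rewrite conjg_expg_eq1.
case: (A4_cases (conjA4 kA aA)) => [[/eqP a2'' _]|[_ [n1 _ n3 _]]].
  by rewrite a2'' in a2'.
by move: n1 n3; rewrite !permJV kx !permV_eq permKV kx.
Qed.

(** * The powers of b *)

Lemma bsec_tr12 : bsec tr12 = None. Proof. by rewrite /bsec eqxx. Qed.
Lemma bsec_tr34 : bsec tr34 = Some C. Proof. by rewrite /bsec (negbTE tr34_tr12) eqxx. Qed.

Lemma bsec_other y : y != tr12 -> y != tr34 -> bsec y = Some D.
Proof. by move=> /negbTE y12 /negbTE y34; rewrite /bsec y12 y34. Qed.

Lemma bsec_eqNone y : (bsec y == None) = (y == tr12).
Proof. by rewrite /bsec; case: ifP => //; case: ifP. Qed.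

Lemma bsec_CD y q : bsec y = Some q -> q = C \/ q = D.
Proof. by rewrite /bsec; case: ifP => // _; case: ifP => _ [<-]; [left|right]. Qed.

Lemma bsec_A4 y q : bsec y = Some q -> q \in A4.
Proof. by case/bsec_CD => ->; [exact: C_A4 | exact: D_A4]. Qed.

Definition bpow (n : nat) : taut X4 := ssact (fun x => omap (fun p => p ^+ n) (bsec x)).
Arguments bpow : simpl never.

Lemma bpow_cons n y u :
  bpow n (y :: u) = y :: (if bsec y is Some q then rooted (q ^+ n) u else bpow n u).
Proof. by rewrite /bpow /=; case: bsec. Qed.

Lemma bpow_nil n : bpow n [::] = [::]. Proof. by rewrite /bpow. Qed.

Lemma bpowD m n u : bpow m (bpow n u) = bpow (n + m) u.
Proof.
elim: u => [|y u IH]; rewrite ?bpow_nil // !bpow_cons.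
by case: bsec => [q|]; rewrite ?rootedM -?expgD ?IH.
Qed.

Lemma bpow_mul6 k u : bpow (6 * k) u = u.
Proof.
elim: u => [|y u IH]; rewrite ?bpow_nil // !bpow_cons.
case Ey: bsec => [q|]; last by rewrite IH.
by rewrite expgM (A4_expg6 (bsec_A4 Ey)) expg1n rooted1.
Qed.

Lemma bpowK m : cancel (bpow m) (bpow (5 * m)).
Proof. by move=> u; rewrite bpowD -{1}(mul1n m) -mulnDl bpow_mul6. Qed.

Lemma bpowKV m : cancel (bpow (5 * m)) (bpow m).
Proof. by move=> u; rewrite bpowD -mulSnr bpow_mul6. Qed.

Lemma b4_bpow1 u : b4 u = bpow 1 u.
Proof.
elim: u => [|y u IH]; rewrite ?bpow_nil // bpow_cons /b4 /=.
by case: bsec => [q|]; rewrite ?expg1 // -IH.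
Qed.

Lemma b4inv_bpow5 u : b4inv u = bpow 5 u.
Proof.
elim: u => [|y u IH]; rewrite ?bpow_nil // bpow_cons /b4inv /=.
case Ey: bsec => [q|] /=; last by rewrite -IH.
congr (_ :: rooted _ _); apply: (@mulIg _ q).
by rewrite mulVg -expgSr (A4_expg6 (bsec_A4 Ey)).
Qed.

Lemma iter_bpow g k n : g =1 bpow k -> iter n g =1 bpow (k * n).
Proof.
move=> gE; elim: n => [|n IH] u /=; first by rewrite muln0 (bpow_mul6 0).
by rewrite IH gE bpowD mulnS addnC.
Qed.

Lemma iter_b4 n : iter n b4 =1 bpow n.
Proof. by move=> u; rewrite (iter_bpow _ b4_bpow1) mul1n. Qed.

Lemma B4_bpow f : B4 f -> exists m, f =1 bpow m.
Proof.
case=> n [fE|fE]; [exists n | exists (5 * n)%N] => u; rewrite fE.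
- exact: iter_b4.
- exact: iter_bpow b4inv_bpow5 u.
Qed.

Lemma size_bpow m u : size (bpow m u) = size u.
Proof.
elim: u => [|y u IH]; rewrite ?bpow_nil // bpow_cons /=.
by case: bsec => [q|]; rewrite ?size_rooted ?IH.
Qed.

Lemma take_bpow m u v : take (size u) (bpow m (u ++ v)) = bpow m u.
Proof.
elim: u => [|y u IH]; first by rewrite /= take0 bpow_nil.
rewrite cat_cons !bpow_cons; case: bsec => [q|] /=; last by rewrite IH.
by case: u {IH} => [|z u] /=; rewrite ?take0 ?take_size_cat.
Qed.

Lemma sect_bpow_tr12 m : sect (bpow m) [:: tr12] =1 bpow m.
Proof. by move=> v; rewrite /sect bpow_cons bsec_tr12 /= drop0. Qed.

Lemma sect_bpow m y q : bsec y = Some q -> sect (bpow m) [:: y] =1 rooted (q ^+ m).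
Proof. by move=> Ey v; rewrite /sect bpow_cons Ey /= drop0. Qed.

(** * The CS-group properties *)

Lemma B4_sect b' x : B4 b' -> x != tr12 ->
  exists q m, bsec x = Some q /\ sect b' [:: x] =1 rooted (q ^+ m).
Proof.
move=> /B4_bpow [m b'E] x12; case Ex: (bsec x) => [q|].
  by exists q, m; split=> // v; rewrite (eq_sect _ b'E) (sect_bpow _ Ex).
by move: (bsec_eqNone x); rewrite Ex eqxx (negbTE x12).
Qed.

Lemma gen_CD : << <[C]> :|: <[D]> >> = A4.
Proof.
apply/eqP; rewrite eqEsubset gen_subG subUset !cycle_subG C_A4 D_A4 /=.
apply/subsetP => _ /imsetP [s /Alt4_wordP [ws _ ->] ->].
elim: ws => [|b ws IH] /=; first by rewrite conjX1 group1.
by rewrite conjXM groupM // mem_gen // inE; case: b; rewrite cycle_id ?orbT.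
Qed.

Lemma CS_group_A4 : CS_group tr12 A4 B4.
Proof.
split.
- exact: group_set_A4.
- exact: A4_transitive.
- move=> b' /B4_bpow [m b'E]; split.
  + split=> [u|u v|]; rewrite ?b'E ?size_bpow ?take_bpow //.
    by exists (bpow (5 * m)) => u; rewrite b'E; [exact: bpowK | exact: bpowKV].
  + by move=> x; rewrite b'E bpow_cons; case: bsec => [q|] //; rewrite bpow_nil.
  + by move=> v; rewrite (eq_sect _ b'E) sect_bpow_tr12 b'E.
- move=> b' x Bb' x12; have [q [m [Ex sectE]]] := B4_sect Bb' x12.
  by exists (q ^+ m); rewrite ?groupX ?(bsec_A4 Ex).
- exists (<[C]> :|: <[D]>); split.
  + move=> a; split.
    * have sect_b4 x q i : bsec x = Some q -> sect (iter i b4) [:: x] =1 rooted (q ^+ i).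
        by move=> Ex v; rewrite (eq_sect _ (iter_b4 i)) (sect_bpow _ Ex).
      rewrite inE => /orP [] /cycleP [i ->].
      - exists (iter i b4), tr34; split; [by exists i; left | exact: tr34_tr12 |].
        exact: sect_b4 bsec_tr34.
      - exists (iter i b4), tr13; split; [by exists i; left | exact: tr13_tr12 |].
        exact: sect_b4 (bsec_other tr13_tr12 tr13_tr34).
    * case=> b' [x [Bb' x12 sect_a]].
      have [q [m [Ex sectE]]] := B4_sect Bb' x12.
      have -> : a = q ^+ m by apply: rooted_inj => v; rewrite -sect_a sectE.
      by rewrite inE; case: (bsec_CD Ex) => ->; rewrite mem_cycle ?orbT.
  + exact: gen_CD.
Qed.

Definition lamA (m : nat) (c : {perm X4}) : {perm X4} :=
  if (c tr12 != tr12) && (c ^+ 2 == 1) then C ^+ m else 1.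

Lemma lam_bpow b' m c : b' =1 bpow m -> c \in A4 -> lam tr12 b' c =1 rooted (lamA m c).
Proof.
move=> b'E cA u; rewrite /lam /lamA.
have sectE y q : bsec y = Some q -> sect b' [:: y] =1 rooted (q ^+ m).
  by move=> Ey v; rewrite (eq_sect _ b'E) (sect_bpow _ Ey).
case: (A4_cases cA) => [[c2 [c12|c34]] | [c3 [n1 n2 n3 n4]]].
- have -> : ell tr12 c = 1%N by apply: ell_traject => //=; rewrite c12.
  by rewrite c12 eqxx rooted1.
- have -> : ell tr12 c = 2%N.
    apply: ell_traject => //=; first by move/permP: c2 => /(_ tr12); rewrite permX perm1; apply.
    by rewrite inE c34 eq_sym tr34_tr12.
  by rewrite /= /tmul /tid expg1 c34 c2 eqxx tr34_tr12 (sectE _ _ bsec_tr34).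
- have -> : ell tr12 c = 3%N.
    apply: ell_traject => //=; first by move/permP: c3 => /(_ tr12); rewrite permX perm1; apply.
    by rewrite !inE negb_or (inj_eq perm_inj) ![tr12 == _]eq_sym n1 n3.
  have c2 : c ^+ 2 != 1 by apply: contra n1 => /eqP c2; rewrite (expg23_eq1 c2 c3) perm1.
  rewrite (negbTE c2) andbF /= /tmul /tid expg1 permX /=.
  rewrite (sectE _ _ (bsec_other n3 n4)) (sectE _ _ (bsec_other n1 n2)).
  by rewrite rootedM -expgD addnn -muln2 mulnC expgM expgD2 expg1n rooted1.
Qed.

Lemma stable_A4 : is_stable tr12 A4 B4.
Proof.
move=> b' a x c1 c2 /B4_bpow [m b'E] aA.
suff lamC c : c \in Cset tr12 A4 a x ->
    lam tr12 b' c =1 rooted (if (a x != x) && (a ^+ 2 == 1) then C ^+ m else 1).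
  by move=> /lamC lam1 /lamC lam2 u; rewrite lam1 lam2.
case/imsetP => k; rewrite inE => /andP [kA /eqP kx] -> u.
by rewrite (lam_bpow b'E (conjA4 kA aA)) /lamA permJV kx permV_eq kx conjg_expg_eq1.
Qed.

Lemma bsec_orbit c i : c \in A4 -> (c ^+ i) tr12 != tr12 ->
  bsec ((c ^+ i) tr12) = Some (if c ^+ 2 == 1 then C else D).
Proof.
move=> cA; case: (A4_cases cA) => [[c2 [c12|c34]] | [c3 [n1 n2 n3 n4]]].
- by rewrite permX (iter_mod_fixpoint _ (_ : iter 1 c tr12 = tr12)) ?modn1 ?eqxx.
- rewrite c2 eqxx -(expg_mod _ c2).
  by case: (i %% 2) (ltn_mod i 2) => [|[|//]] _; rewrite ?expg0 ?perm1 ?eqxx // expg1 c34 bsec_tr34.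
- have c2 : c ^+ 2 != 1 by apply: contra n1 => /eqP c2; rewrite (expg23_eq1 c2 c3) perm1.
  rewrite (negbTE c2) -(expg_mod _ c3).
  case: (i %% 3) (ltn_mod i 3) => [|[|[|//]]] _; rewrite ?expg0 ?perm1 ?eqxx //.
    by rewrite expg1 (bsec_other n1 n2).
  by rewrite permX (bsec_other n3 n4).
Qed.

Lemma strongly_orbitwise_abelian_A4 : strongly_orbitwise_abelian tr12 A4 B4.
Proof.
move=> a x aA /=; set q := if a ^+ 2 == 1 then C else D; set S := fun g => _.
have S_cycle g : S g -> exists2 r, r \in <[q]> & g =1 rooted r.
  case=> b' [y [/B4_bpow [m b'E] [c cC /andP [y_orb y12]] gE]].
  move: cC => /imsetP [k]; rewrite inE => /andP [kA /eqP kx] cE.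
  have [i yE] : exists i, y = (c ^+ i) tr12 by move: y_orb; rewrite -porbitE => /porbitP.
  have cA : c \in A4 by rewrite cE conjA4.
  have Ey : bsec y = Some q by rewrite /q -(conjg_expg_eq1 k) -cE yE bsec_orbit // -yE.
  by exists (q ^+ m); rewrite ?mem_cycle // => v; rewrite gE (eq_sect _ b'E) (sect_bpow _ Ey).
move=> g h /(gen_rooted_group S_cycle) [r1 /cycleP [i ->] gE].
move=> /(gen_rooted_group S_cycle) [r2 /cycleP [j ->] hE] u.
by rewrite /tmul !gE !hE !rootedM -!expgD addnC.
Qed.

Lemma lamA_A4 m c : lamA m c \in A4.
Proof. by rewrite /lamA; case: ifP; rewrite ?group1 ?groupX ?C_A4. Qed.

Lemma lamA_expg3 m c : lamA m c ^+ 3 = 1.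
Proof.
rewrite /lamA; case: ifP => _; last exact: expg1n.
by rewrite -expgM mulnC expgM expgC3 expg1n.
Qed.

Lemma lamA_order3 m c : c ^+ 3 = 1 -> lamA m c = 1.
Proof.
move=> c3; rewrite /lamA; case: ifP => // /andP [c12 /eqP c2].
by move: c12; rewrite (expg23_eq1 c2 c3) perm1 eqxx.
Qed.

(* Lambda sends A into the elements of order dividing 3, and those to 1. *)
Lemma eventually_trivial_A4 (e : X4 -> {perm X4}) b' :
  (forall x, e x \in A4) -> B4 b' -> eventually_trivial tr12 A4 e b'.
Proof.
move=> eA /B4_bpow [m b'E] a aA.
suff iterLam n p : iter n (Lam tr12 e b') (eq a) p ->
    [/\ p \in A4, (0 < n -> p ^+ 3 = 1) & (1 < n -> p = 1)].
  by exists 1%N => n n_gt1 p /iterLam [_ _ ->].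
elim: n p => [|n IH] p /=; first by move=> <-.
case=> a' [x [/IH [a'A a'3 a'1] pE]].
have -> : p = lamA m (e x * a' * (e x)^-1).
  by apply: rooted_inj => u; rewrite pE (lam_bpow b'E (conjA4 (eA x) a'A)).
split=> [||n_gt0]; rewrite ?lamA_A4 ?lamA_expg3 //.
by apply/lamA_order3/eqP; rewrite conjg_expg_eq1 a'3.
Qed.

(** * Periodicity *)

Inductive letter := Rooted of {perm X4} | Bpow of nat.

Definition act_letter (l : letter) : taut X4 :=
  match l with Rooted q => rooted q | Bpow n => bpow n end.

Fixpoint act_word (w : seq letter) (u : seq X4) : seq X4 :=
  if w is l :: w' then act_word w' (act_letter l u) else u.

Fixpoint word_root (w : seq letter) : {perm X4} :=
  match w with
  | [::] => 1
  | Rooted q :: w' => q * word_root w'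
  | Bpow _ :: w' => word_root w'
  end.

(* One pair (p, n) per letter [Bpow n] of [w], where p is the product of the
   rooted letters preceding it. *)
Fixpoint word_bpows (w : seq letter) : seq ({perm X4} * nat) :=
  match w with
  | [::] => [::]
  | Rooted q :: w' => [seq (q * e.1, e.2) | e <- word_bpows w']
  | Bpow n :: w' => (1, n) :: word_bpows w'
  end.

Definition sect_letter (y : X4) (e : {perm X4} * nat) : letter :=
  if bsec (e.1 y) is Some q then Rooted (q ^+ e.2) else Bpow e.2.

Definition word_sect (w : seq letter) (y : X4) : seq letter :=
  map (sect_letter y) (word_bpows w).

Fixpoint word_pow n (w : seq letter) : seq letter :=
  if n is n'.+1 then word_pow n' w ++ w else [::].

Definition is_bpow (l : letter) := if l is Bpow _ then true else false.
Definition weight (w : seq letter) := count is_bpow w.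
Definition bpow_word (w : seq letter) := all is_bpow w.

Definition roots_in (T : {set {perm X4}}) (w : seq letter) :=
  all (fun l => if l is Rooted q then q \in T else true) w.

Definition word_class (w : seq letter) : nat :=
  if roots_in <[D]> w then 0%N else if roots_in <[C]> w then 1%N else 2%N.

Definition word_measure (w : seq letter) : nat := (3 * weight w + word_class w)%N.

Lemma act_word_nil w : act_word w [::] = [::].
Proof. by elim: w => //= -[q|n] w IH; rewrite /= ?bpow_nil. Qed.

Lemma act_word_cons w y u :
  act_word w (y :: u) = word_root w y :: act_word (word_sect w y) u.
Proof.
elim: w y u => [|[q|n] w IH] y u /=; first by rewrite perm1.
- rewrite IH permM; congr (_ :: act_word _ u); rewrite /word_sect -map_comp.
  by apply: eq_map => e; rewrite /sect_letter /= permM.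
- by rewrite bpow_cons IH /word_sect /= /sect_letter /= perm1; case: bsec.
Qed.

Lemma act_word_cat w1 w2 u : act_word (w1 ++ w2) u = act_word w2 (act_word w1 u).
Proof. by elim: w1 u => //= l w1 IH u. Qed.

Lemma word_root_cat w1 w2 : word_root (w1 ++ w2) = word_root w1 * word_root w2.
Proof. by elim: w1 => [|[q|n] w1 IH] /=; rewrite ?mul1g ?IH ?mulgA. Qed.

Lemma word_bpows_cat w1 w2 :
  word_bpows (w1 ++ w2) =
  word_bpows w1 ++ [seq (word_root w1 * e.1, e.2) | e <- word_bpows w2].
Proof.
elim: w1 => [|[q|n] w1 IH] /=.
- by rewrite (eq_map (g := id)) ?map_id // => -[p k] /=; rewrite mul1g.
- rewrite IH map_cat -map_comp; congr (_ ++ _).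
  by apply: eq_map => e /=; rewrite mulgA.
- by rewrite IH.
Qed.

Lemma word_sect_cat w1 w2 y :
  word_sect (w1 ++ w2) y = word_sect w1 y ++ word_sect w2 (word_root w1 y).
Proof.
rewrite /word_sect word_bpows_cat map_cat -map_comp; congr (_ ++ _).
by apply: eq_map => e; rewrite /sect_letter /= permM.
Qed.

Lemma iter_act_word n w u : iter n (act_word w) u = act_word (word_pow n w) u.
Proof. by elim: n u => //= n IH u; rewrite IH act_word_cat. Qed.

Lemma word_root_pow n w : word_root (word_pow n w) = word_root w ^+ n.
Proof. by elim: n => //= n IH; rewrite word_root_cat IH expgSr. Qed.

Lemma word_sect_pow n w y :
  word_sect (word_pow n w) y =
  flatten [seq word_sect w ((word_root w ^+ i) y) | i <- iota 0 n].
Proof.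
elim: n => // n IH; rewrite [word_pow _ _]/= word_sect_cat IH word_root_pow.
by rewrite -[n.+1]addn1 iotaD map_cat flatten_cat /= cats0.
Qed.

Lemma weight_cat w1 w2 : weight (w1 ++ w2) = (weight w1 + weight w2)%N.
Proof. exact: count_cat. Qed.

Lemma weight_pow n w : weight (word_pow n w) = (n * weight w)%N.
Proof. by elim: n => // n IH; rewrite /= weight_cat IH mulSnr. Qed.

Lemma size_word_bpows w : size (word_bpows w) = weight w.
Proof. by elim: w => //= -[q|n] w IH; rewrite /= ?size_map IH. Qed.

Lemma is_bpow_sect_letter y e : is_bpow (sect_letter y e) = (e.1 y == tr12).
Proof. by rewrite /sect_letter -bsec_eqNone; case: bsec. Qed.

Lemma weight_flatten_sect (O : seq X4) w : uniq O ->
  weight (flatten [seq word_sect w y | y <- O]) =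
  count (fun e : {perm X4} * nat => e.1^-1 tr12 \in O) (word_bpows w).
Proof.
elim: O => [|y O IH] /= => [_|/andP [yO uO]].
  by rewrite (eq_count (a2 := pred0)) ?count_pred0.
pose at_y (e : {perm X4} * nat) := e.1^-1 tr12 == y.
pose in_O (e : {perm X4} * nat) := e.1^-1 tr12 \in O.
have disj : count (predI at_y in_O) (word_bpows w) = 0%N.
  rewrite (eq_count (a2 := pred0)) ?count_pred0 // => e /=.
  by rewrite /at_y /in_O; case: eqP => //= ->; apply/negbTE.
rewrite (eq_count (a2 := predU at_y in_O)) => [|e]; last by rewrite inE.
rewrite -[RHS]addn0 -[X in _ = _ + X]disj count_predUI /weight count_cat [count _ (flatten _)]IH //.
congr (_ + _)%N; rewrite /word_sect count_map; apply: eq_count => e /=.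
by rewrite is_bpow_sect_letter /at_y permV_eq eq_sym.
Qed.

Lemma roots_in_group (G : {group {perm X4}}) w : roots_in G w ->
  word_root w \in G /\ (forall e, e \in word_bpows w -> e.1 \in G).
Proof.
elim: w => [|[q|n] w IH] /=; first by rewrite group1.
- case/andP=> qG /IH [rG eG]; split; first by rewrite groupM.
  by move=> _ /mapP [e /eG eG' ->]; rewrite groupM.
- case/IH=> rG eG; split=> // e.
  by rewrite inE => /orP [/eqP ->|/eG]; rewrite ?group1.
Qed.

Lemma roots_in_flatten_sect (T : {set {perm X4}}) (O : seq X4) w :
  (forall y e, y \in O -> e \in word_bpows w ->
     if sect_letter y e is Rooted q then q \in T else true) ->
  roots_in T (flatten [seq word_sect w y | y <- O]).
Proof.
elim: O => //= y O IH sectT; rewrite /roots_in all_cat; apply/andP; split.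
  by rewrite all_map; apply/allP => e eb /=; apply: sectT; rewrite ?mem_head.
by apply: IH => z e zO; apply: sectT; rewrite inE zO orbT.
Qed.

Lemma roots_in_A4_sect w y : roots_in A4 (word_sect w y).
Proof.
rewrite /roots_in all_map; apply/allP => e _ /=; rewrite /sect_letter.
by case Ey: bsec => [q|] //; rewrite groupX ?(bsec_A4 Ey).
Qed.

Lemma cycleD_tr12 r : r \in <[D]> -> r tr12 = tr12.
Proof. by case/cycleP => i ->; rewrite permX; elim: i => //= i ->; apply: D_tr12. Qed.

Lemma cycleD_expg2 r : r \in <[D]> -> r ^+ 2 = 1.
Proof. by case/cycleP => i ->; rewrite -expgM mulnC expgM expgD2 expg1n. Qed.

Lemma cycleC_expg2 r : r \in <[C]> -> r ^+ 2 = 1 -> r = 1.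
Proof.
case/cycleP => i -> r2; apply: expg23_eq1 => //.
by rewrite -expgM mulnC expgM expgC3 expg1n.
Qed.

(* p a p^-1 is an involution moving (1 2) to p y. *)
Lemma involution_orbit_tr34 a p x y z : a \in A4 -> p \in A4 -> a ^+ 2 = 1 -> a x != x ->
  y \in [:: x; a x] -> z \in [:: x; a x] -> p z = tr12 -> p y != tr12 -> p y = tr34.
Proof.
move=> aA pA a2 ax yO zO pz py.
have yz : y = a z.
  move: yO zO py pz; rewrite !inE => /orP [] /eqP -> /orP [] /eqP -> py pz //;
    try by rewrite pz eqxx in py.
  by rewrite -[LHS](perm1 x) -a2 permX.
have c2 : (p^-1 * a * p^-1^-1) ^+ 2 = 1 by apply/eqP; rewrite conjg_expg_eq1 a2.
have c12 : (p^-1 * a * p^-1^-1) tr12 = p y.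
  by rewrite permJV invgK yz -pz permK.
case: (A4_cases (conjA4 (groupVr pA) aA)) => [[_ [E|E]]|[c3 _]].
- by move: py; rewrite -c12 E eqxx.
- by rewrite -c12.
- by move: py; rewrite -c12 (expg23_eq1 c2 c3) perm1 eqxx.
Qed.

Lemma order3_orbit_tr34 a p x y z : a \in A4 -> p \in A4 -> a ^+ 2 != 1 ->
  y \in [:: x; a x; a (a x)] -> z \in [:: x; a x; a (a x)] -> p z = tr12 ->
  p y != tr12 -> p y != tr34.
Proof.
move=> aA pA a2 yO zO pz py.
have a3 t : a (a (a t)) = t by rewrite -[RHS](perm1 t) -(A4_order3 aA a2) permX.
have yz : y = a z \/ y = a (a z).
  move: yO zO py pz; rewrite !inE => /or3P [] /eqP -> /or3P [] /eqP -> py pz;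
    rewrite ?a3; auto; by rewrite pz eqxx in py.
have c2 : (p^-1 * a * p^-1^-1) ^+ 2 != 1 by rewrite conjg_expg_eq1.
have c12 : (p^-1 * a * p^-1^-1) tr12 = p (a z) by rewrite permJV invgK -pz permK.
have cc12 : (p^-1 * a * p^-1^-1) ((p^-1 * a * p^-1^-1) tr12) = p (a (a z)).
  by rewrite c12 permJV invgK permK.
case: (A4_cases (conjA4 (groupVr pA) aA)) => [[/eqP c2' _]|[_ [_ n2 _ n4]]].
  by rewrite c2' in c2.
by rewrite c12 in n2; rewrite cc12 in n4; case: yz => ->.
Qed.

Definition orbit_len (a : {perm X4}) (x : X4) : nat :=
  if a x == x then 1%N else if a ^+ 2 == 1 then 2%N else 3%N.

Definition orbit_seq (a : {perm X4}) (x : X4) : seq X4 :=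
  [seq (a ^+ i) x | i <- iota 0 (orbit_len a x)].

Lemma orbit_len_gt0 a x : 0 < orbit_len a x.
Proof. by rewrite /orbit_len; case: ifP => //; case: ifP. Qed.

Lemma expg_orbit_len a x : a \in A4 -> (a ^+ orbit_len a x) x = x.
Proof.
move=> aA; rewrite /orbit_len; case: ifP => [/eqP //|_].
by case: ifP => [/eqP ->|/negbT/(A4_order3 aA) ->]; rewrite perm1.
Qed.

Lemma orbit_seq1 (a : {perm X4}) x : a x = x -> orbit_seq a x = [:: x].
Proof. by move=> ax; rewrite /orbit_seq /orbit_len ax eqxx /= expg0 perm1. Qed.

Lemma orbit_seq2 (a : {perm X4}) x : a x != x -> a ^+ 2 = 1 -> orbit_seq a x = [:: x; a x].
Proof. by move=> /negbTE ax a2; rewrite /orbit_seq /orbit_len ax a2 eqxx /= expg0 perm1 expg1. Qed.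

Lemma orbit_seq3 (a : {perm X4}) x :
  a x != x -> a ^+ 2 != 1 -> orbit_seq a x = [:: x; a x; a (a x)].
Proof.
by move=> /negbTE ax /negbTE a2; rewrite /orbit_seq /orbit_len ax a2 /= expg0 perm1 expg1 permX.
Qed.

Lemma uniq_orbit_seq a x : a \in A4 -> uniq (orbit_seq a x).
Proof.
move=> aA; case: (eqVneq (a x) x) => [/orbit_seq1 -> //|ax].
case: (eqVneq (a ^+ 2) 1) => [a2|a2].
  by rewrite orbit_seq2 //= inE eq_sym ax.
have [n1 n2] := A4_order3_nofix x aA a2.
by rewrite orbit_seq3 //= !inE !negb_or (inj_eq perm_inj) ![x == _]eq_sym ax n2.
Qed.

Section SectionAlongOrbit.
Variables (w : seq letter) (x : X4).
Hypothesis wA : roots_in A4 w.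
Let a := word_root w.
Let v := word_sect (word_pow (orbit_len a x) w) x.

Lemma word_sect_orbit : v = flatten [seq word_sect w y | y <- orbit_seq a x].
Proof. by rewrite /v word_sect_pow /orbit_seq -map_comp. Qed.

Lemma weight_sect_orbit :
  weight v = count (fun e : {perm X4} * nat => e.1^-1 tr12 \in orbit_seq a x) (word_bpows w).
Proof.
by rewrite word_sect_orbit weight_flatten_sect // uniq_orbit_seq //; case: (roots_in_group wA).
Qed.

Hypothesis all_in_orbit : forall e, e \in word_bpows w -> e.1^-1 tr12 \in orbit_seq a x.

Lemma sect_orbit1 : a x = x -> bpow_word v.
Proof.
move=> ax; rewrite /bpow_word word_sect_orbit (orbit_seq1 ax) /= cats0.
rewrite all_map; apply/allP => e eb /=; rewrite is_bpow_sect_letter.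
by move: (all_in_orbit eb); rewrite (orbit_seq1 ax) inE permV_eq eq_sym.
Qed.

Lemma roots_in_sect_orbit (T : {set {perm X4}}) :
  (forall y p, y \in orbit_seq a x -> p \in A4 -> p^-1 tr12 \in orbit_seq a x ->
     p y != tr12 -> if bsec (p y) is Some q then q \in T else true) ->
  (forall q n, q \in T -> q ^+ n \in T) -> roots_in T v.
Proof.
move=> sectT T_X; have [_ eA] := roots_in_group wA.
rewrite word_sect_orbit; apply: roots_in_flatten_sect => y e yO eb; rewrite /sect_letter.
case: (eqVneq (e.1 y) tr12) => [E|ny]; first by rewrite E bsec_tr12.
have := sectT y _ yO (eA e eb) (all_in_orbit eb) ny.
by case: (bsec _) => // q qT; apply: T_X.
Qed.

Lemma sect_orbit2 e0 : e0 \in word_bpows w -> a x != x -> a ^+ 2 = 1 ->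
  word_class v < word_class w.
Proof.
move=> e0b ax a2; have [aA eA] := roots_in_group wA.
have class_w : word_class w = 2%N.
  rewrite /word_class; case: ifP => [wD|_].
    have [/cycleD_tr12 aD /(_ e0 e0b)/groupVr/cycleD_tr12 e0D] := roots_in_group wD.
    move: (all_in_orbit e0b); rewrite (orbit_seq2 ax a2) e0D !inE.
    case/orP => /eqP x12; move: ax; first by rewrite -x12 aD eqxx.
    by rewrite -{1}aD in x12; rewrite -(perm_inj x12) aD eqxx.
  case: ifP => // wC; have [aC _] := roots_in_group wC.
  by move: ax; rewrite /a (cycleC_expg2 aC a2) perm1 eqxx.
suff vC : roots_in <[C]> v by rewrite class_w /word_class vC; case: ifP.
apply: roots_in_sect_orbit => [y p|q n qC]; last exact: groupX.
rewrite (orbit_seq2 ax a2) => yO pA pO py.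
by rewrite (involution_orbit_tr34 aA pA a2 ax yO pO (permKV p tr12) py) bsec_tr34 cycle_id.
Qed.

Lemma sect_orbit3 : a x != x -> a ^+ 2 != 1 -> word_class v < word_class w.
Proof.
move=> ax a2; have [aA _] := roots_in_group wA.
have class_w : 0 < word_class w.
  rewrite /word_class; case: ifP => [wD|]; last by case: ifP.
  by have [/cycleD_expg2 aD _] := roots_in_group wD; rewrite /a aD eqxx in a2.
suff vD : roots_in <[D]> v by rewrite /word_class vD.
apply: roots_in_sect_orbit => [y p|q n qD]; last exact: groupX.
rewrite (orbit_seq3 ax a2) => yO pA pO py.
have p34 := order3_orbit_tr34 aA pA a2 yO pO (permKV p tr12) py.
by rewrite (bsec_other py p34) cycle_id.
Qed.

End SectionAlongOrbit.

Lemma word_class_le2 w : word_class w <= 2.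
Proof. by rewrite /word_class; case: ifP => //; case: ifP. Qed.

Lemma word_sect_descent w x : roots_in A4 w ->
  let v := word_sect (word_pow (orbit_len (word_root w) x) w) x in
  bpow_word v \/ word_measure v < word_measure w.
Proof.
move=> wA v; have cv := word_class_le2 v; have cw := word_class_le2 w.
have : weight v <= weight w by rewrite weight_sect_orbit // -size_word_bpows count_size.
rewrite leq_eqVlt => /orP [/eqP eq_w|lt_w]; last by right; rewrite /word_measure; lia.
suff : bpow_word v \/ word_class v < word_class w.
  by case=> [|lt_c]; [left | right; rewrite /word_measure eq_w; lia].
have all_in e : e \in word_bpows w -> e.1^-1 tr12 \in orbit_seq (word_root w) x.
  by move: e; apply/allP; rewrite all_count -weight_sect_orbit // eq_w size_word_bpows.
case: (eqVneq (word_root w x) x) => [ax|ax]; first by left; apply: sect_orbit1.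
case E0: (word_bpows w) => [|e0 l0].
  by left; rewrite /bpow_word /v word_sect_orbit // /word_sect E0; elim: orbit_seq.
right; case: (eqVneq (word_root w ^+ 2) 1) => a2; last exact: sect_orbit3.
by apply: (sect_orbit2 wA all_in (e0 := e0)); rewrite ?E0 ?mem_head.
Qed.

Lemma act_word_weight0 w u : weight w = 0%N -> act_word w u = rooted (word_root w) u.
Proof.
elim: w u => [|[q|n] w IH] u //=; first by rewrite rooted1.
by move=> w0; rewrite IH // rootedM.
Qed.

Lemma bpow_word_root w :
  bpow_word w -> word_root w = 1 /\ (forall e, e \in word_bpows w -> e.1 = 1).
Proof.
move=> wB; have wT : roots_in [1 {perm X4}] w by apply: sub_all wB => -[].
have [/set1P r1 e1] := roots_in_group (G := 1%G) wT.
by split=> // e /e1 /set1P.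
Qed.

Lemma bpow_word_sect_tr12 w : bpow_word w -> bpow_word (word_sect w tr12).
Proof.
case/bpow_word_root=> _ e1; rewrite /bpow_word all_map; apply/allP => e eb /=.
by rewrite is_bpow_sect_letter e1 ?perm1.
Qed.

Lemma bpow_word_sect w y : bpow_word w -> y != tr12 -> weight (word_sect w y) = 0%N.
Proof.
case/bpow_word_root=> _ e1 y12; rewrite /word_sect /weight count_map.
apply/eqP; rewrite -leqn0 leqNgt -has_count; apply/hasPn => e eb /=.
by rewrite is_bpow_sect_letter e1 ?perm1.
Qed.

Lemma word_sect_pow_root1 n w y :
  word_root w = 1 -> word_sect (word_pow n w) y = word_pow n (word_sect w y).
Proof.
move=> r1; elim: n => // n IH.
by rewrite [word_pow _ _]/= word_sect_cat IH word_root_pow r1 expg1n perm1.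
Qed.

Lemma bpow_word_period w u : bpow_word w -> iter 6 (act_word w) u = u.
Proof.
rewrite iter_act_word; elim: u w => [|y u IH] w wB; first by rewrite act_word_nil.
have [r1 _] := bpow_word_root wB.
rewrite act_word_cons word_root_pow r1 expg1n perm1 word_sect_pow_root1 //; congr (_ :: _).
case: (eqVneq y tr12) => [->|y12]; first exact/IH/bpow_word_sect_tr12.
rewrite act_word_weight0; last by rewrite weight_pow (bpow_word_sect wB y12) muln0.
have [rA _] := roots_in_group (roots_in_A4_sect w y).
by rewrite word_root_pow (A4_expg6 rA) rooted1.
Qed.

Lemma iter_period_mul (T : Type) (f : T -> T) N K u :
  (forall u, iter N f u = u) -> iter (N * K) f u = u.
Proof. by move=> fN; elim: K => [|K IH]; rewrite ?muln0 // mulnS iterD IH fN. Qed.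

Lemma iter_act_word_orbit w x u j : word_root w \in A4 ->
  iter (orbit_len (word_root w) x * j) (act_word w) (x :: u) =
  x :: iter j (act_word (word_sect (word_pow (orbit_len (word_root w) x) w) x)) u.
Proof.
move=> rA; elim: j => [|j IH]; first by rewrite muln0.
by rewrite mulnS iterD IH iter_act_word act_word_cons word_root_pow expg_orbit_len.
Qed.

Lemma act_word_periodic w : roots_in A4 w ->
  exists2 N, 0 < N & forall u, iter N (act_word w) u = u.
Proof.
have [n] := ubnP (word_measure w); elim: n w => // n IHn w /ltnSE lt_wn wA.
have [rA _] := roots_in_group wA.
have sect_period x : exists N, 0 < N /\ forall u,
    iter N (act_word (word_sect (word_pow (orbit_len (word_root w) x) w) x)) u = u.
  case: (word_sect_descent x wA) => [vB|lt_v].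
    by exists 6%N; split=> // u; apply: bpow_word_period.
  by have [N N_gt0 vN] := IHn _ (leq_trans lt_v lt_wn) (roots_in_A4_sect _ x); exists N.
have [N HN] := fin_all_exists sect_period.
exists (\prod_(x : X4) (orbit_len (word_root w) x * N x))%N.
  by apply: prodn_gt0 => x; rewrite muln_gt0 orbit_len_gt0 (proj1 (HN x)).
case=> [|x u]; first by rewrite iter_act_word act_word_nil.
rewrite (bigD1 x) //= -mulnA iter_act_word_orbit //; congr (_ :: _).
by apply: iter_period_mul; case: (HN x).
Qed.

Definition letter_inv (l : letter) :=
  match l with Rooted q => Rooted q^-1 | Bpow n => Bpow (5 * n) end.
Definition word_inv (w : seq letter) := rev (map letter_inv w).

Lemma act_word_invK w u : act_word w (act_word (word_inv w) u) = u.
Proof.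
elim: w u => // l w IH u.
rewrite /word_inv map_cons rev_cons -cats1 act_word_cat -/(word_inv w) /= -[RHS]IH.
by case: l => [q|n] /=; rewrite ?rootedM ?mulVg ?rooted1 ?bpowKV.
Qed.

Lemma G4_word f : G4 f -> exists2 w, roots_in A4 w & f =1 act_word w.
Proof.
elim=> {f} [|f [[a aA fE]|/B4_bpow [m fE]]|g h _ [w1 w1A gE] _ [w2 w2A hE]
            |g h _ [w wA gE] gh _|g h _ [w wA gE] gh].
- by exists [::].
- by exists [:: Rooted a]; rewrite /roots_in /= ?aA.
- by exists [:: Bpow m].
- exists (w1 ++ w2); first by rewrite /roots_in all_cat; apply/andP.
  by move=> u; rewrite /tmul act_word_cat gE hE.
- exists (word_inv w).
    by rewrite /roots_in /word_inv all_rev all_map; apply: sub_all wA => -[q|n] //=; rewrite groupV.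
  by move=> u; rewrite -[RHS](gh (act_word (word_inv w) u)) gE act_word_invK.
- by exists w => // u; rewrite -gh.
Qed.

Theorem mainTheorem14 :
  [/\ CS_group tr12 A4 B4,
      is_stable tr12 A4 B4,
      strongly_orbitwise_abelian tr12 A4 B4,
      (forall (e : X4 -> {perm X4}),
         e tr12 = 1%g -> (forall x, e x \in A4) -> (forall x, e x tr12 = x) ->
         forall b', B4 b' -> eventually_trivial tr12 A4 e b')
    & is_periodic G4].
Proof.
split.
- exact: CS_group_A4.
- exact: stable_A4.
- exact: strongly_orbitwise_abelian_A4.
- by move=> e _ eA _ b'; apply: eventually_trivial_A4.
- move=> g /G4_word [w wA gE]; have [N N_gt0 wN] := act_word_periodic wA.
  by exists N => // u; rewrite (eq_iter gE) wN.
Qed.
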